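(* Let $L$ be a right pre-Lie algebra over $k$ and let $(S(L),\ast)$ be the Guin--Oudom presentation of its enveloping algebra. For arbitrary $l_1,\ldots,l_n\in L$ one has, in $S(L)$, $$ l_1\cdots l_n=\sum_{\{P_1,\ldots,P_k\}}(-1)^{n-k}\,l_{P_1}\ast\cdots\ast l_{P_k}, $$ where the left-hand side is the commutative product in $S(L)$, the sum runs over all set partitions $\{P_1,\ldots,P_k\}$ of $\{1,\ldots,n\}$ with blocks indexed so that $\max P_1<\max P_2<\cdots<\max P_k$, and for a block $P_i=\{p_1<\cdots<p_h\}$, $$ l_{P_i}:=\sum_{\sigma\in S_{h-1}} l_{p_{\sigma(1)}}\curvearrowleft\Big(l_{p_{\sigma(2)}}\curvearrowleft\big(\cdots\curvearrowleft(l_{p_{\sigma(h-1)}}\curvearrowleft l_{p_h})\cdots\big)\Big) $$ (for $h=1$, $l_{P_i}=l_{p_1}$).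
   Context: $k$ is a field of characteristic zero. A right pre-Lie algebra is a vector space $L$ with a bilinear product $\curvearrowleft$ satisfying $(x\curvearrowleft y)\curvearrowleft z-x\curvearrowleft(y\curvearrowleft z)=(x\curvearrowleft z)\curvearrowleft y-x\curvearrowleft(z\curvearrowleft y)$ for all $x,y,z\in L$. $S(L)$ is the symmetric algebra on $L$ (commutative product written as juxtaposition, unit $1$). The pre-Lie product is extended to an action of $S(L)$ on $L$ recursively: $l\curvearrowleft 1=l$ and, for $l,l_1,\ldots,l_n\in L$, $l\curvearrowleft(l_1\cdots l_n)=(l\curvearrowleft(l_1\cdots l_{n-1}))\curvearrowleft l_n-\sum_{i=1}^{n-1}l\curvearrowleft(l_1\cdots l_{i-1}(l_i\curvearrowleft l_n)l_{i+1}\cdots l_{n-1})$. The Guin--Oudom product $\ast$ on $S(L)$ is the bilinear product with unit $1$ given by $(a_1\cdots a_n)\ast(b_1\cdots b_m)=\sum_f B_0\,(a_1\curvearrowleft B_1)\cdots(a_n\curvearrowleft B_n)$ for $a_i,b_j\in L$, the sum over all maps $f:\{1,\ldots,m\}\to\{0,\ldots,n\}$, with $B_i=\prod_{j\in f^{-1}(i)}b_j$ (empty product $=1$). It is associative and $(S(L),\ast)$ is isomorphic to the universal enveloping algebra of the Lie algebra $(L,[a,b]=a\curvearrowleft b-b\curvearrowleft a)$. *)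

From HB Require Import structures.
From mathcomp Require Import all_boot all_order all_algebra all_fingroup.
From mathcomp Require Import finmap.
From mathcomp.multinomials Require Import monalg.

Set Implicit Arguments.
Unset Strict Implicit.
Unset Printing Implicit Defensive.

Import GRing.Theory.
Local Open Scope ring_scope.

(* Model of S(L):  S(L) = F / symker, where F = {malg k[seq L]} is the free
   k-vector space on words of elements of L (word w ~ commutative monomial)
   and symker is the k-subspace spanned by the multilinearity relations and
   the commutativity (permutation) relations.  Equality in S(L) of (the classes
   of) u, v in F is  symker (u - v). *)

Section GuinOudom.
Variables (k : fieldType) (L : lmodType k) (pl : L -> L -> L).

Definition word (s : seq L) : {malg k[seq L]} := << s >>.

Inductive symker : {malg k[seq L]} -> Prop :=
| symker0 : symker 0
| symkerD x y : symker x -> symker y -> symker (x + y)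
| symkerZ (a : k) x : symker x -> symker (a *: x)
| symker_perm (s t : seq L) : perm_eq s t -> symker (word s - word t)
| symker_lin (s t : seq L) (a : k) (x y : L) :
    symker (word (s ++ (a *: x + y) :: t) - a *: word (s ++ x :: t)
            - word (s ++ y :: t)).

(* Recursive extension of the pre-Lie product to an action of words:
   l <~ 1 = l, and
   l <~ (l_1...l_n) = (l <~ (l_1...l_{n-1})) <~ l_n
        - sum_{i<n} l <~ (l_1 ... (l_i <~ l_n) ... l_{n-1}).
   (the fuel m is the length of the word) *)
Fixpoint act_aux (m : nat) (x : L) (s : seq L) : L :=
  match m with
  | 0 => x
  | m'.+1 =>
    match s with
    | [::] => x
    | _ =>
      let ln := last 0 s in
      let init := take (size s).-1 s in
      pl (act_aux m' x init) ln
      - \sum_(i < size init)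
          act_aux m' x (set_nth 0 init i (pl (nth 0 init i) ln))
    end
  end.

Definition act (x : L) (s : seq L) : L := act_aux (size s) x s.

(* Guin--Oudom product of two monomials a_1...a_n and b_1...b_m :
   sum over f : {1..m} -> {0..n} of B_0 (a_1 <~ B_1) ... (a_n <~ B_n). *)
Definition GO_block (a b : seq L) (f : {ffun 'I_(size b) -> 'I_(size a).+1})
  (i : nat) : seq L :=
  [seq nth 0 b (val j) | j <- enum 'I_(size b) & val (f j) == i].

Definition GO_word (a b : seq L) : {malg k[seq L]} :=
  \sum_(f : {ffun 'I_(size b) -> 'I_(size a).+1})
     word (GO_block f 0 ++
           [seq act (nth 0 a i) (GO_block f i.+1) | i <- iota 0 (size a)]).

Definition GO_prod (u v : {malg k[seq L]}) : {malg k[seq L]} :=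
  \sum_(s <- msupp u) \sum_(t <- msupp v) (u@_s * v@_t) *: GO_word s t.

Definition GO_iter (xs : seq L) : {malg k[seq L]} :=
  foldl (fun acc x => GO_prod acc (word [:: x])) (word [::]) xs.

Section Partition.
Variables (n : nat) (l : 'I_n -> L).

Definition lblock (A : {set 'I_n}) : L :=
  match [seq i <- enum 'I_n | i \in A] with
  | [::] => 0
  | p :: ps =>
    let r := belast p ps in
    \sum_(sigma : 'S_(size r))
       foldr pl (l (last p ps))
             [seq l (nth p r (sigma i)) | i <- enum 'I_(size r)]
  end.

Definition blockmax (A : {set 'I_n}) : nat := \max_(i in A) (val i).

Definition sorted_blocks (P : {set {set 'I_n}}) : seq {set 'I_n} :=
  sort (fun A B => blockmax A <= blockmax B)%N (enum P).

End Partition.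
End GuinOudom.

From Pilot Require Import Defs.
From HB Require Import structures.
From mathcomp Require Import all_boot all_order all_algebra all_fingroup.
From mathcomp Require Import finmap.
From mathcomp.multinomials Require Import monalg.
From mathcomp Require Import zify.

(* Group the partitions of A according to the
   block B containing m = max A; since l_B is then the last factor, each such
   term is a Guin--Oudom product u * l_B with u an alternating sum over the
   partitions of A \ B, which by induction is the monomial l_{A \ B}.  For
   y in L one has (a_1 ... a_r) * y = y a_1 ... a_r + sum_i a_1 ... (a_i <~ y)
   ... a_r, and the recursion l_S = sum_{x in S, x <> m} l_x <~ l_{S \ x}
   makes the resulting alternating sum over B telescope to l_m l_{A \ m}. *)

Set Implicit Arguments.
Unset Strict Implicit.
Unset Printing Implicit Defensive.

Import GRing.Theory.
Local Open Scope ring_scope.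

Section SymEquiv.
Variables (k : fieldType) (L : lmodType k).
Local Notation M := {malg k[seq L]}.
Local Notation symker := (@symker k L).
Local Notation word := (@word k L).

Definition symeq (u v : M) := symker (u - v).

Lemma symkerN u : symker u -> symker (- u).
Proof. by move=> h; rewrite -scaleN1r; apply: symkerZ. Qed.

Lemma symeq_refl u : symeq u u.
Proof. by rewrite /symeq subrr; apply: symker0. Qed.

Lemma symeq_sym u v : symeq u v -> symeq v u.
Proof. by rewrite /symeq => /symkerN; rewrite opprB. Qed.

Lemma symeq_trans u v w : symeq u v -> symeq v w -> symeq u w.
Proof. by move=> h1 h2; have := symkerD h1 h2; rewrite /symeq addrA subrK. Qed.

Lemma symeqD u1 u2 v1 v2 :
  symeq u1 v1 -> symeq u2 v2 -> symeq (u1 + u2) (v1 + v2).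
Proof. by move=> h1 h2; have := symkerD h1 h2; rewrite /symeq opprD addrACA. Qed.

Lemma symeqZ (a : k) u v : symeq u v -> symeq (a *: u) (a *: v).
Proof. by move=> h; rewrite /symeq -scalerBr; apply: symkerZ. Qed.

Lemma symeq_sum (I : Type) (r : seq I) (P : pred I) (F G : I -> M) :
  (forall i, P i -> symeq (F i) (G i)) ->
  symeq (\sum_(i <- r | P i) F i) (\sum_(i <- r | P i) G i).
Proof.
move=> h; apply: (big_ind2 symeq) => //; first exact: symeq_refl.
by move=> *; apply: symeqD.
Qed.

Lemma symeq_sum_seq (I : eqType) (r : seq I) (F G : I -> M) :
  {in r, forall i, symeq (F i) (G i)} ->
  symeq (\sum_(i <- r) F i) (\sum_(i <- r) G i).
Proof. by move=> h; rewrite big_seq [X in symeq _ X]big_seq; apply: symeq_sum. Qed.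

Lemma symeq_perm s t : perm_eq s t -> symeq (word s) (word t).
Proof. exact: symker_perm. Qed.

Lemma symeq_lin s t (a : k) x y :
  symeq (word (s ++ (a *: x + y) :: t))
        (a *: word (s ++ x :: t) + word (s ++ y :: t)).
Proof. by rewrite /symeq opprD addrA; apply: symker_lin. Qed.

Lemma symeq_word_sum (I : Type) (r : seq I) (P : pred I) (v : I -> L) s :
  symeq (word ((\sum_(i <- r | P i) v i) :: s))
        (\sum_(i <- r | P i) word (v i :: s)).
Proof.
have wordD x y : symeq (word ((x + y) :: s)) (word (x :: s) + word (y :: s)).
  by have := symeq_lin [::] s 1 x y; rewrite !scale1r.
have word0 : symeq (word (0 :: s)) 0.
  have := symkerN (wordD 0 0).
  by rewrite addr0 opprB addrK /symeq subr0.
apply: (big_ind2 (fun x y => symeq (word (x :: s)) y)) => //.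
  by move=> x1 y1 x2 y2 h1 h2; apply: symeq_trans (wordD _ _) _; apply: symeqD.
by move=> i _; apply: symeq_refl.
Qed.

Definition linext (F : seq L -> M) (u : M) : M :=
  \sum_(s <- msupp u) u@_s *: F s.

Lemma linext_fsubset F u (d : {fset seq L}) : (msupp u `<=` d)%fset ->
  linext F u = \sum_(s <- d) u@_s *: F s.
Proof.
move=> le; rewrite /linext [LHS](big_fset_incl _ le) //= => x _ /mcoeff_outdom ->.
by rewrite scale0r.
Qed.

Lemma linextD F u v : linext F (u + v) = linext F u + linext F v.
Proof.
set d := (msupp u `|` msupp v)%fset.
rewrite (@linext_fsubset F (u + v) d) ?msuppD_le //.
rewrite (@linext_fsubset F u d) ?fsubsetUl // (@linext_fsubset F v d) ?fsubsetUr //.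
by rewrite -big_split; apply: eq_bigr => s _; rewrite mcoeffD scalerDl.
Qed.

Lemma linextZ F a u : linext F (a *: u) = a *: linext F u.
Proof.
rewrite (@linext_fsubset F (a *: u) (msupp u)) ?msuppZ_le // /linext scaler_sumr.
by apply: eq_bigr => s _; rewrite mcoeffZ scalerA.
Qed.

Lemma linext0 F : linext F 0 = 0.
Proof. by rewrite /linext msupp0 big_seq_fset0. Qed.

Lemma linextB F u v : linext F (u - v) = linext F u - linext F v.
Proof. by rewrite linextD -scaleN1r linextZ scaleN1r. Qed.

Lemma linext_word F s : linext F (word s) = F s.
Proof.
rewrite (@linext_fsubset F (word s) [fset s]%fset) ?msuppU_le // big_seq_fset1.
by rewrite /word mcoeffUU scale1r.
Qed.

Lemma linext_sum F (I : Type) (r : seq I) (P : pred I) (G : I -> M) :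
  linext F (\sum_(i <- r | P i) G i) = \sum_(i <- r | P i) linext F (G i).
Proof. exact: (big_morph (linext F) (linextD F) (linext0 F)). Qed.

Lemma linext_symeq F :
  (forall s t, perm_eq s t -> symeq (F s) (F t)) ->
  (forall s t a x y, symeq (F (s ++ (a *: x + y) :: t))
                           (a *: F (s ++ x :: t) + F (s ++ y :: t))) ->
  forall u v, symeq u v -> symeq (linext F u) (linext F v).
Proof.
move=> Fperm Flin u v; rewrite /symeq -linextB.
elim=> [|x y _ hx _ hy|a x _ hx|s t st|s t a x y].
- by rewrite linext0; apply: symker0.
- by rewrite linextD; apply: symkerD.
- by rewrite linextZ; apply: symkerZ.
- by rewrite linextB !linext_word; apply: Fperm.
- by rewrite !linextB linextZ !linext_word; have := Flin s t a x y; rewrite /symeq opprD addrA.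
Qed.

End SymEquiv.

Section Updates.
Variables (T : Type) (f : T -> T).

Fixpoint updates (s : seq T) : seq (seq T) :=
  if s is x :: s' then (f x :: s') :: map (cons x) (updates s') else [::].

Lemma updates_cat s t :
  updates (s ++ t) = map (cat^~ t) (updates s) ++ map (cat s) (updates t).
Proof.
elim: s => [|x s IH] /=; first by rewrite map_id.
by rewrite IH map_cat -!map_comp.
Qed.

Lemma updates_iota x0 s :
  [seq [seq if j == i then f (nth x0 s j) else nth x0 s j | j <- iota 0 (size s)]
    | i <- iota 0 (size s)] = updates s.
Proof.
elim: s => [//|x s IH] /=.
rewrite -[1%N]/(1 + 0)%N iotaDl -!map_comp /=; congr (_ :: _).
  congr (_ :: _); rewrite -[RHS](mkseq_nth x0) /mkseq.
  by apply: eq_map => j /=; rewrite add0n.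
rewrite -IH -map_comp; apply: eq_map => i /=.
by rewrite -map_comp /=; congr (_ :: _); apply: eq_map.
Qed.

End Updates.

Section RightMultiplication.
Variables (k : fieldType) (L : lmodType k) (pl : L -> L -> L).
Local Notation M := {malg k[seq L]}.
Local Notation word := (@word k L).
Local Notation symeq := (@symeq k L).
Local Notation linext := (@linext k L).

Definition sum_updates (f : L -> L) (s : seq L) : M :=
  \sum_(w <- updates f s) word w.

Definition cons_lin (x : L) : M -> M := linext (fun w => word (x :: w)).

Definition mul_elt (y : L) (s : seq L) : M :=
  word (y :: s) + sum_updates (pl^~ y) s.

Lemma act_seq1 x y : Defs.act pl x [:: y] = pl x y.
Proof.
rewrite /Defs.act /= [X in _ - X]big1_seq ?subr0 // => i.
by rewrite /index_enum -enumT /= enum_ord0.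
Qed.

Lemma GO_word_seq1 a y : GO_word pl a [:: y] = mul_elt y a.
Proof.
have enum_ord1 : enum 'I_1 = [:: ord0] by rewrite enum_ordSl enum_ord0.
rewrite /GO_word /= (reindex (fun g : 'I_(size a).+1 => [ffun _ : 'I_1 => g])) /=;
  last first.
  exists (fun f : {ffun 'I_1 -> 'I_(size a).+1} => f ord0) => [g _|f _].
    by rewrite ffunE.
  by apply/ffunP => i; rewrite ffunE (ord1 i).
rewrite big_ord_recl /GO_block enum_ord1 /= ffunE /=; congr (word (_ :: _) + _).
  by rewrite -[RHS](mkseq_nth 0) /mkseq; apply: eq_map.
rewrite /sum_updates -(updates_iota _ 0) big_map.
rewrite [in RHS](_ : iota 0 _ = index_iota 0 (size a)) ?big_mkord; last first.
  by rewrite /index_iota subn0.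
apply: eq_bigr => i _; rewrite ffunE /= /index_iota subn0.
congr word; apply: eq_map => j /=; rewrite /bump /= add1n eqSS eq_sym.
by case: (j == i) => /=; rewrite ?act_seq1.
Qed.

Lemma GO_prod_word1 u y : GO_prod pl u (word [:: y]) = linext (mul_elt y) u.
Proof.
rewrite /GO_prod /linext; apply: eq_bigr => s _.
by rewrite /word msuppU oner_eq0 big_seq_fset1 mcoeffUU mulr1 GO_word_seq1.
Qed.

Lemma GO_iter_rcons xs y :
  GO_iter pl (rcons xs y) = GO_prod pl (GO_iter pl xs) (word [:: y]).
Proof. by rewrite /GO_iter foldl_rcons. Qed.

Lemma symeq_cons_lin x u v : symeq u v -> symeq (cons_lin x u) (cons_lin x v).
Proof.
apply: linext_symeq => [s t st|s t a y z]; last exact: (symeq_lin (x :: s)).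
by apply: symeq_perm; rewrite perm_cons.
Qed.

Lemma cons_lin_sum_updates x f s :
  cons_lin x (sum_updates f s) = \sum_(w <- updates f s) word (x :: w).
Proof.
by rewrite /cons_lin /sum_updates linext_sum; apply: eq_bigr => w _; rewrite linext_word.
Qed.

Lemma sum_updates_cons f x s :
  sum_updates f (x :: s) = word (f x :: s) + cons_lin x (sum_updates f s).
Proof. by rewrite cons_lin_sum_updates /sum_updates /= big_cons big_map. Qed.

Lemma sum_updates_cat1 f s z t : sum_updates f (s ++ z :: t) =
  \sum_(w <- updates f s) word (w ++ z :: t) +
  (word (s ++ f z :: t) + \sum_(w <- updates f t) word (s ++ z :: w)).
Proof. by rewrite /sum_updates updates_cat big_cat !big_map /= big_cons big_map. Qed.

Lemma symeq_sum_updates_perm f s t :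
  perm_eq s t -> symeq (sum_updates f s) (sum_updates f t).
Proof.
have move_front (x : L) s1 s2 : perm_eq (x :: s1 ++ s2) (s1 ++ x :: s2).
  by rewrite -cat1s perm_catCA.
elim: s t => [|x s IH] t.
  by move/perm_size; case: t => // _; apply: symeq_refl.
move=> st; have xt : x \in t by rewrite -(perm_mem st) mem_head.
case/splitPr: xt st => t1 t2 st.
have st' : perm_eq s (t1 ++ t2).
  by rewrite -(perm_cons x) (perm_trans st) // perm_sym move_front.
rewrite sum_updates_cons sum_updates_cat1.
apply: symeq_trans (symeqD (symeq_refl _) (symeq_cons_lin x (IH _ st'))) _.
rewrite cons_lin_sum_updates updates_cat big_cat !big_map /= addrCA.
apply: symeqD; last apply: symeqD.
- by apply: symeq_sum => w _; apply: symeq_perm.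
- by apply: symeq_perm; rewrite (perm_trans _ (move_front _ _ _)) ?perm_cons.
- by apply: symeq_sum => w _; apply: symeq_perm.
Qed.

Lemma symeq_sum_updates_lin f :
  (forall (a : k) x y, f (a *: x + y) = a *: f x + f y) ->
  forall s t (a : k) x y,
  symeq (sum_updates f (s ++ (a *: x + y) :: t))
        (a *: sum_updates f (s ++ x :: t) + sum_updates f (s ++ y :: t)).
Proof.
have regroup (A1 B1 C1 A2 B2 C2 : M) :
  A1 + (B1 + C1) + (A2 + (B2 + C2)) = A1 + A2 + (B1 + B2 + (C1 + C2)).
  by rewrite addrACA; congr (_ + _); rewrite addrACA.
move=> flin s t a x y; rewrite !sum_updates_cat1 !scalerDr !scaler_sumr regroup.
apply: symeqD; last apply: symeqD.
- by rewrite -big_split; apply: symeq_sum => w _; apply: symeq_lin.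
- by rewrite flin; apply: symeq_lin.
- by rewrite -big_split; apply: symeq_sum => w _; apply: symeq_lin.
Qed.

Hypothesis pl_linl :
  forall (a : k) (x y z : L), pl (a *: x + y) z = a *: pl x z + pl y z.

Lemma symeq_GO_prod_word1 y u v : symeq u v ->
  symeq (GO_prod pl u (word [:: y])) (GO_prod pl v (word [:: y])).
Proof.
rewrite !GO_prod_word1; apply: linext_symeq => [s t st|s t a x z].
  apply: symeqD; last exact: symeq_sum_updates_perm.
  by apply: symeq_perm; rewrite perm_cons.
rewrite /mul_elt scalerDr addrACA; apply: symeqD; first exact: (symeq_lin (y :: s)).
by apply: symeq_sum_updates_lin => b x' y'; apply: pl_linl.
Qed.

End RightMultiplication.

Lemma big_perm_at (R : Type) (idx : R) (op : Monoid.com_law idx) q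
    (i j : 'I_q.+1) (F : 'S_q.+1 -> R) :
  \big[op/idx]_(s : 'S_q.+1 | s i == j) F s =
  \big[op/idx]_(s : 'S_q) F (lift_perm i j s).
Proof.
rewrite (reindex (lift_perm i j)); last first.
  pose unlift_at (s : 'S_q.+1) x := odflt x (unlift (s i) (s (lift i x))).
  have unlift_atK (s : 'S_q.+1) x : lift (s i) (unlift_at s x) = s (lift i x).
    rewrite /unlift_at; have:= neq_lift i x.
    by rewrite -(can_eq (permK s)) => /unlift_some[] ? ? ->.
  have unlift_at_inj s : injective (unlift_at s).
    move=> x y /(congr1 (lift (s i))); rewrite !unlift_atK => /perm_inj.
    exact: lift_inj.
  exists (fun s => perm (unlift_at_inj s)) => [s _ | s /eqP si].
    by apply/permP=> x; rewrite permE /unlift_at lift_perm_lift lift_perm_id liftK.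
  apply/permP=> x; case: (unliftP i x) => [x'|] ->; rewrite ?lift_perm_id //.
  by rewrite lift_perm_lift -si permE unlift_atK.
by apply: eq_bigl => s; rewrite lift_perm_id eqxx.
Qed.

Section Chains.
Variables (k : fieldType) (L : lmodType k) (pl : L -> L -> L).
Hypothesis pl_linr :
  forall (a : k) (x y z : L), pl z (a *: x + y) = a *: pl z x + pl z y.

Lemma pl_sumr z (I : Type) (r : seq I) (P : pred I) (F : I -> L) :
  pl z (\sum_(i <- r | P i) F i) = \sum_(i <- r | P i) pl z (F i).
Proof.
have pl_addr : {morph pl z : x y / x + y}.
  by move=> x y; have := pl_linr 1 x y z; rewrite !scale1r.
have pl_0r : pl z 0 = 0.
  by apply: (addIr (pl z 0)); rewrite add0r -pl_addr addr0.
exact: (big_morph (pl z) pl_addr pl_0r).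
Qed.

Definition lchain (z : L) (q : nat) (g : nat -> L) : L :=
  \sum_(s : 'S_q) foldr pl z [seq g (val (s i)) | i <- enum 'I_q].

Lemma eq_lchain z q g1 g2 : {in gtn q, g1 =1 g2} -> lchain z q g1 = lchain z q g2.
Proof.
move=> eg; apply: eq_bigr => s _; congr foldr; apply: eq_map => i.
by apply: eg; rewrite inE /=.
Qed.

Lemma lchainS z q g :
  lchain z q.+1 g = \sum_(j < q.+1) pl (g j) (lchain z q (fun i => g (bump j i))).
Proof.
rewrite /lchain (partition_big (fun s : 'S_q.+1 => s ord0) xpredT) //=.
apply: eq_bigr => j _; rewrite pl_sumr big_perm_at; apply: eq_bigr => s _.
rewrite enum_ordSl /= lift_perm_id -map_comp; congr (pl _ (foldr _ _ _)).
by apply: eq_map => i /=; rewrite lift_perm_lift.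
Qed.

End Chains.

Section EnumFilter.
Variable n : nat.
Local Notation ltI := (relpre val ltn : rel 'I_n).

Lemma sorted_ltn_enum_ord : sorted ltI (enum 'I_n).
Proof. by rewrite -sorted_map val_enum_ord iota_ltn_sorted. Qed.

Lemma filter_enum_max (S : {set 'I_n}) m : m \in S ->
    (forall i, i \in S -> (i <= m)%N) ->
  [seq i <- enum 'I_n | i \in S] = rcons [seq i <- enum 'I_n | i \in S :\ m] m.
Proof.
have ltI_trans : transitive ltI by move=> ? ? ? /=; apply: ltn_trans.
move=> mS hS; apply: (irr_sorted_eq ltI_trans (fun i => ltnn i)).
- by apply: (sorted_filter ltI_trans); apply: sorted_ltn_enum_ord.
- set r := filter _ _.
  have : sorted ltI r.
    by apply: (sorted_filter ltI_trans); apply: sorted_ltn_enum_ord.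
  have : {in r, forall i : 'I_n, (i < m)%N}.
    move=> i; rewrite mem_filter in_setD1 => /andP[/andP[im iS] _].
    by rewrite ltn_neqAle hS // andbT; apply: contra im => /eqP/val_inj ->.
  case: r => [|x r'] //= hr sr; rewrite rcons_path sr /=; apply: hr.
  exact: mem_last.
- move=> i; rewrite mem_rcons inE !mem_filter in_setD1 -enumT mem_enum andbT.
  by case: eqP => [->|_] /=; rewrite ?mS // andbT.
Qed.

End EnumFilter.

Section RemNth.
Variable T : Type.

Definition rem_nth (r : seq T) j := take j r ++ drop j.+1 r.

Lemma nth_rem_nth (r : seq T) x0 j i : (j < size r)%N ->
  nth x0 (rem_nth r j) i = nth x0 r (bump j i).
Proof.
move=> jr; rewrite /rem_nth nth_cat size_take jr /bump.
case: ltnP => ij; first by rewrite add0n nth_take.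
by rewrite add1n nth_drop addSn subnKC.
Qed.

Lemma size_rem_nth (r : seq T) j : (j < size r)%N ->
  size (rem_nth r j) = (size r).-1.
Proof.
move=> jr; rewrite /rem_nth size_cat size_take jr size_drop.
by case: (size r) jr => // q; rewrite ltnS => jq; rewrite subSS subnKC.
Qed.

End RemNth.

Section Lblock.
Variables (k : fieldType) (L : lmodType k) (pl : L -> L -> L).
Hypothesis pl_linr :
  forall (a : k) (x y z : L), pl z (a *: x + y) = a *: pl z x + pl z y.
Variables (n : nat) (l : 'I_n -> L).
Local Notation lb := (lblock pl l).

Lemma lblockE (S : {set 'I_n}) r m : [seq i <- enum 'I_n | i \in S] = rcons r m ->
  lb S = lchain pl (l m) (size r) (fun i => l (nth m r i)).
Proof.
rewrite /lblock => ->; case: r => [|x r] //=.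
rewrite belast_rcons last_rcons; apply: eq_bigr => s _; congr foldr.
by apply: eq_map => i; congr l; apply: set_nth_default.
Qed.

Lemma lblock1 m : lb [set m] = l m.
Proof.
rewrite (@lblockE _ [::] m); last first.
  rewrite (@filter_enum_max _ _ m) ?set11 //; last by move=> i /set1P ->.
  by rewrite setDv (@eq_filter _ _ pred0) ?filter_pred0 // => i; rewrite in_set0.
rewrite /lchain /= (big_pred1 1%g) => [|s]; first by rewrite enum_ord0.
by apply/esym/eqP/permP => -[].
Qed.

Lemma filter_enum_setD1_nth (S : {set 'I_n}) m r j :
  [seq i <- enum 'I_n | i \in S :\ m] = r -> (j < size r)%N ->
  [seq i <- enum 'I_n | i \in S :\ nth m r j :\ m] = rem_nth r j.
Proof.
move=> Er jr; have ur : uniq r by rewrite -Er filter_uniq // enum_uniq.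
set x := nth m r j.
rewrite /rem_nth -(index_uniq m jr ur) -/x -remE rem_filter // -Er [RHS]/= -filter_predI.
by apply: eq_filter => i /=; rewrite !in_setD1 andbCA.
Qed.

Lemma lblock_rec (S : {set 'I_n}) m : m \in S ->
    (forall i, i \in S -> (i <= m)%N) -> S != [set m] ->
  lb S = \sum_(x in S :\ m) pl (l x) (lb (S :\ x)).
Proof.
move=> mS hS nSm; set r := [seq i <- enum 'I_n | i \in S :\ m].
rewrite (lblockE (filter_enum_max mS hS)).
have : r != [::].
  apply: contraNneq nSm => r0; rewrite eqEsubset sub1set mS andbT.
  apply/subsetP => x xS; rewrite inE; apply: contraT => xm.
  suff : x \in r by rewrite r0.
  by rewrite mem_filter in_setD1 xm xS mem_enum.
case Es: (size r) => [|q] rn; first by move: rn; rewrite -size_eq0 Es.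
have -> : \sum_(x in S :\ m) pl (l x) (lb (S :\ x)) =
          \sum_(x <- r) pl (l x) (lb (S :\ x)) by rewrite big_filter big_enum_cond.
rewrite lchainS // (big_nth m) big_mkord Es; apply: eq_bigr => j _; congr (pl _ _).
have jr : (j < size r)%N by rewrite Es.
have xm : nth m r j != m.
  by have := mem_nth m jr; rewrite mem_filter in_setD1 => /andP[/andP[]].
rewrite (@lblockE _ (rem_nth r j) m); last first.
  rewrite (@filter_enum_max _ _ m) ?(filter_enum_setD1_nth (erefl r)) //.
    by rewrite in_setD1 eq_sym xm mS.
  by move=> i; rewrite in_setD1 => /andP[_ /hS].
rewrite size_rem_nth // Es; apply: eq_lchain => i _.
by rewrite nth_rem_nth.
Qed.

End Lblock.

Section FinsetBig.
Variable T : finType.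

(* Both sums are indexed by the pairs (B, x) with m in B, B <= A and x in A \ B,
   reindexed by S = x |: B. *)
Lemma exchange_big_setU1 (R : Type) (idx : R) (op : Monoid.com_law idx)
    (A : {set T}) (m : T) (H : {set T} -> T -> R) :
  \big[op/idx]_(B : {set T} | (m \in B) && (B \subset A))
     \big[op/idx]_(x in A :\: B) H B x =
  \big[op/idx]_(S : {set T} | (m \in S) && (S \subset A))
     \big[op/idx]_(x in S :\ m) H (S :\ x) x.
Proof.
rewrite (exchange_big_dep xpredT) // [RHS](exchange_big_dep xpredT) //.
apply: eq_bigr => x _.
rewrite [RHS](reindex_onto (fun B => x |: B) (fun S => S :\ x)) /=; last first.
  by move=> S /andP[_]; rewrite in_setD1 => /andP[_ xS]; rewrite setD1K.
apply: eq_big => B; last first.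
  by move=> /andP[_]; rewrite in_setD => /andP[xB _]; rewrite setU1K.
have -> : ((x |: B) :\ x == B) = (x \notin B).
  by apply/eqP/idP => [<-|/setU1K //]; rewrite !inE eqxx.
rewrite in_setD in_setU1 subUset sub1set in_setD1 setU11 andbT.
case xB: (x \in B); case mB: (m \in B); case: (x \in A); case: (B \subset A);
  rewrite ?andbF ?andbT ?orbT ?orbF //=.
  by case: eqP => // xm; subst x; rewrite mB in xB.
by case: eqP => // ->; rewrite eqxx.
Qed.

Lemma partition_setU1 (A B : {set T}) (Q : {set {set T}}) (m : T) :
    m \in B -> B \subset A -> partition Q (A :\: B) ->
  partition (B |: Q) A /\ B \notin Q.
Proof.
move=> mB BA pQ.
have BQ : B \notin Q.
  by apply/negP => /(partitionS pQ) /subsetP /(_ m mB); rewrite in_setD mB.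
split=> //; rewrite -(setIidPr BA) -{2}(setID A B) (setIidPr BA).
apply: partitionU1 => //; first by apply/set0Pn; exists m.
by rewrite disjoint_sym; apply/setDidPl; rewrite setDDl setUid.
Qed.

Lemma big_partition_block (R : Type) (idx : R) (op : Monoid.com_law idx)
    (A : {set T}) (m : T) (F : {set {set T}} -> R) : m \in A ->
  \big[op/idx]_(P : {set {set T}} | partition P A) F P =
  \big[op/idx]_(B : {set T} | (m \in B) && (B \subset A))
     \big[op/idx]_(Q : {set {set T}} | partition Q (A :\: B)) F (B |: Q).
Proof.
move=> mA; rewrite (partition_big (fun P => pblock P m)
  (fun B => (m \in B) && (B \subset A))); last first.
  move=> P pP; have mc : m \in cover P by rewrite (cover_partition pP).
  by rewrite mem_pblock mc (partitionS pP) // pblock_mem.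
apply: eq_bigr => B /andP[mB BA].
rewrite (reindex_onto (fun Q => B |: Q) (fun P => P :\ B)) /=; last first.
  move=> P /andP[pP /eqP <-]; rewrite setD1K // pblock_mem //.
  by rewrite (cover_partition pP).
apply: eq_bigl => Q; apply/idP/idP.
  case/andP=> /andP[pP _] /eqP <-.
  by apply: partitionD1 => //; rewrite setU11.
move=> pQ; have [pBQ BQ] := partition_setU1 mB BA pQ.
rewrite pBQ /= setU1K // eqxx andbT.
by rewrite (def_pblock (partition_trivIset pBQ) (setU11 B Q) mB).
Qed.

Lemma card_partition_setU1 (A B : {set T}) (Q : {set {set T}}) (m : T) :
    m \in B -> B \subset A -> partition Q (A :\: B) ->
  (#|A| - #|B |: Q| = #|B|.-1 + (#|A :\: B| - #|Q|))%N.
Proof.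
move=> mB BA pQ; have [_ BQ] := partition_setU1 mB BA pQ.
have cQ : (#|Q| <= #|A :\: B|)%N.
  rewrite (card_partition pQ) -sum1_card leq_sum // => C CQ.
  by rewrite card_gt0 (partition_neq0 pQ CQ).
have cB : (0 < #|B|)%N by rewrite card_gt0; apply/set0Pn; exists m.
have cBA := subset_leq_card BA.
move: cQ; rewrite cardsU1 BQ cardsD (setIidPr BA) /=.
by move: cB cBA; move: #|A| #|B| #|Q| => a b q; lia.
Qed.

End FinsetBig.

Section Telescoping.
Variables (k : fieldType) (L : lmodType k) (pl : L -> L -> L).
Hypothesis pl_linr :
  forall (a : k) (x y z : L), pl z (a *: x + y) = a *: pl z x + pl z y.
Variables (n : nat) (l : 'I_n -> L).
Local Notation M := {malg k[seq L]}.
Local Notation word := (@word k L).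
Local Notation symeq := (@symeq k L).
Local Notation lb := (lblock pl l).

Definition word_set (x : L) (C : {set 'I_n}) : M :=
  word (x :: [seq l i | i <- enum C]).

Lemma perm_rem_enum (C : {set 'I_n}) x : perm_eq (rem x (enum C)) (enum (C :\ x)).
Proof.
apply: uniq_perm; rewrite ?rem_uniq ?enum_uniq // => i.
by rewrite mem_rem_uniq ?enum_uniq // !inE !mem_enum in_setD1.
Qed.

Lemma sum_updates_map f (e : seq 'I_n) :
  symeq (sum_updates f [seq l i | i <- e])
        (\sum_(y <- e) word (f (l y) :: [seq l i | i <- rem y e])).
Proof.
elim: e => [|x e IH] /=; first by rewrite /sum_updates !big_nil; apply: symeq_refl.
rewrite sum_updates_cons big_cons eqxx; apply: symeqD; first exact: symeq_refl.
apply: symeq_trans (symeq_cons_lin (l x) IH) _.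
rewrite /cons_lin linext_sum; apply: symeq_sum_seq => y ye; rewrite linext_word.
apply: symeq_perm; rewrite -[[:: l x, _ & _]]/([:: l x] ++ [:: _] ++ _).
rewrite perm_catCA perm_cons; case: eqP => [->|_] //=.
by rewrite -map_cons perm_map // perm_sym (perm_to_rem ye).
Qed.

Lemma mul_elt_set y (C : {set 'I_n}) :
  symeq (mul_elt pl y [seq l i | i <- enum C])
        (word_set y C + \sum_(x in C) word_set (pl (l x) y) (C :\ x)).
Proof.
apply: symeqD; first exact: symeq_refl.
apply: symeq_trans (sum_updates_map _ _) _.
rewrite -[X in symeq _ X]big_enum /=; apply: symeq_sum_seq => x xC.
by apply: symeq_perm; rewrite perm_cons perm_map // perm_rem_enum.
Qed.

(* For S <> {m} the two kinds of terms cancel by lblock_rec, since their signs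
   are opposite. *)
Lemma telescope_term (A S : {set 'I_n}) (m : 'I_n) :
    (forall i, i \in A -> (i <= m)%N) -> m \in S -> S \subset A ->
  symeq ((-1) ^+ #|S|.-1 *: word_set (lb S) (A :\: S) +
         \sum_(x in S :\ m) (-1) ^+ #|S :\ x|.-1 *:
            word_set (pl (l x) (lb (S :\ x))) (A :\: (S :\ x) :\ x))
        (if S == [set m] then word_set (l m) (A :\ m) else 0).
Proof.
move=> hA mS SA; have hS i : i \in S -> (i <= m)%N by move/(subsetP SA)/hA.
case: eqP => [->|/eqP nS].
  by rewrite setDv big_set0 addr0 cards1 expr0 scale1r lblock1; apply: symeq_refl.
have S_gt1 : (1 < #|S|)%N.
  rewrite (cardsD1 m S) mS ltnS card_gt0; apply: contraNneq nS => S0.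
  apply/eqP/setP => i; rewrite inE; case: eqP => [->|/eqP im]; first by rewrite mS.
  by have := in_set0 i; rewrite -S0 in_setD1 im /= => ->.
set c : k := (-1) ^+ (#|S|.-1).-1.
rewrite (eq_bigr (fun x => c *: word_set (pl (l x) (lb (S :\ x))) (A :\: S))); last first.
  move=> x /setD1P[_ xS]; rewrite /c (cardsD1 x S) xS add1n /=.
  congr (_ *: word_set _ _); apply/setP => i; rewrite !inE.
  by case: eqP => [->|] //=; rewrite xS.
rewrite -scaler_sumr.
apply: symeq_trans
  (symeqD (symeq_refl _) (symeqZ c (symeq_sym (symeq_word_sum _ _ _ _)))) _.
rewrite -(lblock_rec pl_linr l mS hS nS) -scalerDl /c.
case: #|S| S_gt1 => [|[|q]] // _ /=.
by rewrite exprS mulN1r addNr scale0r; apply: symeq_refl.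
Qed.

Lemma telescope_blocks (A : {set 'I_n}) (m : 'I_n) :
    m \in A -> (forall i, i \in A -> (i <= m)%N) ->
  symeq (\sum_(B : {set 'I_n} | (m \in B) && (B \subset A))
          (-1) ^+ #|B|.-1 *: mul_elt pl (lb B) [seq l i | i <- enum (A :\: B)])
        (word_set (l m) (A :\ m)).
Proof.
move=> mA hA.
apply: symeq_trans (_ : symeq _ (\sum_(B : {set 'I_n} | (m \in B) && (B \subset A))
    (-1) ^+ #|B|.-1 *: (word_set (lb B) (A :\: B) +
       \sum_(x in A :\: B) word_set (pl (l x) (lb B)) (A :\: B :\ x)))) _.
  by apply: symeq_sum => B _; apply: symeqZ; apply: mul_elt_set.
under eq_bigr => B _ do rewrite scalerDr scaler_sumr.
rewrite big_split /= (exchange_big_setU1 _ A m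
  (fun B x => (-1) ^+ #|B|.-1 *: word_set (pl (l x) (lb B)) (A :\: B :\ x))).
rewrite -big_split /=.
apply: symeq_trans (_ : symeq _ (\sum_(S : {set 'I_n} | (m \in S) && (S \subset A))
   (if S == [set m] then word_set (l m) (A :\ m) else 0))) _.
  by apply: symeq_sum => S /andP[mS SA]; apply: telescope_term.
rewrite -big_mkcondr /= (big_pred1 [set m]); first exact: symeq_refl.
move=> S /=; case: eqP => [->|]; last by rewrite andbF.
by rewrite set11 sub1set mA.
Qed.

End Telescoping.

Section SortedBlocks.
Variable n : nat.

Lemma blockmax_le (C : {set 'I_n}) (m : nat) :
  (forall i : 'I_n, i \in C -> (i <= m)%N) -> (blockmax C <= m)%N.
Proof. by move=> h; apply/bigmax_leqP => i; apply: h. Qed.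

Lemma blockmax_ge (C : {set 'I_n}) (i : 'I_n) : i \in C -> (i <= blockmax C)%N.
Proof. by move=> iC; apply: (leq_bigmax_cond (F := fun j : 'I_n => val j)). Qed.

Lemma blockmax_mem (C : {set 'I_n}) :
  C != set0 -> exists2 i : 'I_n, i \in C & blockmax C = i.
Proof.
by rewrite -card_gt0 => /(eq_bigmax_cond (fun j : 'I_n => val j)) [i iC e]; exists i.
Qed.

(* Distinct blocks of a partition have distinct maxima, so the sort is
   determined by the block of the global maximum m being last. *)
Lemma sorted_blocks_setU1 (A B : {set 'I_n}) (Q : {set {set 'I_n}}) (m : 'I_n) :
    (forall i, i \in A -> (i <= m)%N) -> m \in B -> B \subset A ->
    partition Q (A :\: B) ->
  sorted_blocks (B |: Q) = rcons (sorted_blocks Q) B.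
Proof.
move=> hA mB BA pQ; have [pBQ BQ] := partition_setU1 mB BA pQ.
rewrite /sorted_blocks.
set r := (fun C D : {set 'I_n} => (blockmax C <= blockmax D)%N).
have r_total : total r by move=> x y; apply: leq_total.
have r_trans : transitive r by move=> y x z; apply: leq_trans.
have maxB : blockmax B = m.
  apply/anti_leq; rewrite blockmax_ge // andbT; apply: blockmax_le => i /(subsetP BA).
  exact: hA.
have sorted_rcons : sorted r (rcons (sort r (enum Q)) B).
  case: (sort r (enum Q)) (sort_sorted r_total (enum Q)) (mem_sort r (enum Q)) => //=.
  move=> C s ss memQ.
  rewrite rcons_path ss /r maxB; apply: blockmax_le => i.
  have : last C s \in enum Q by rewrite -memQ mem_last.
  by rewrite mem_enum => /(partitionS pQ)/subsetP/[apply]; rewrite in_setD => /andP[_ /hA].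
rewrite -[RHS](sorted_sort r_trans sorted_rcons).
apply/(perm_sort_inP _ (in2W r_total) (in3W r_trans)).
  move=> C1 C2; rewrite !mem_enum => C1in C2in /andP[h1 h2].
  have [i1 i1C e1] := blockmax_mem (partition_neq0 pBQ C1in).
  have [i2 i2C e2] := blockmax_mem (partition_neq0 pBQ C2in).
  have ii : i1 = i2 by apply/val_inj/anti_leq; move: h1 h2; rewrite /r e1 e2 => -> ->.
  apply/eqP; apply: contraT => ne.
  have /trivIsetP/(_ C1 C2 C1in C2in ne) := partition_trivIset pBQ.
  by move/disjointFr/(_ i1C); rewrite ii i2C.
apply: uniq_perm; rewrite ?rcons_uniq ?sort_uniq ?enum_uniq ?mem_sort ?mem_enum ?BQ //.
by move=> C; rewrite mem_rcons inE mem_sort !mem_enum in_setU1.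
Qed.

End SortedBlocks.

Section Expansion.
Variables (k : fieldType) (L : lmodType k) (pl : L -> L -> L).
Hypothesis pl_linl :
  forall (a : k) (x y z : L), pl (a *: x + y) z = a *: pl x z + pl y z.
Hypothesis pl_linr :
  forall (a : k) (x y z : L), pl z (a *: x + y) = a *: pl z x + pl z y.
Variables (n : nat) (l : 'I_n -> L).
Local Notation symeq := (@symeq k L).
Local Notation lb := (lblock pl l).

Definition partition_sum (A : {set 'I_n}) : {malg k[seq L]} :=
  \sum_(P : {set {set 'I_n}} | partition P A)
     (-1) ^+ (#|A| - #|P|) *: GO_iter pl [seq lb C | C <- sorted_blocks P].

Lemma partition_sum_block (A : {set 'I_n}) (m : 'I_n) :
    m \in A -> (forall i, i \in A -> (i <= m)%N) ->
  partition_sum A =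
  \sum_(B : {set 'I_n} | (m \in B) && (B \subset A))
     (-1) ^+ #|B|.-1 *: GO_prod pl (partition_sum (A :\: B)) (word [:: lb B]).
Proof.
move=> mA hA; rewrite /partition_sum (big_partition_block _ _ mA).
apply: eq_bigr => B /andP[mB BA]; rewrite GO_prod_word1 linext_sum scaler_sumr.
apply: eq_bigr => Q pQ; rewrite (sorted_blocks_setU1 hA mB BA pQ) map_rcons.
rewrite GO_iter_rcons GO_prod_word1 linextZ scalerA -exprD.
by rewrite (card_partition_setU1 mB BA pQ).
Qed.

Lemma word_partition_sum (A : {set 'I_n}) :
  symeq (word [seq l i | i <- enum A]) (partition_sum A).
Proof.
have [N] := ubnP #|A|; elim: N A => // N IH A /ltnSE cardA.
have [->|[m0 m0A]] := set_0Vmem A.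
  rewrite /partition_sum (big_pred1 set0) => [|P]; last by rewrite partition_set0.
  by rewrite cards0 /sorted_blocks !enum_set0 expr0 scale1r; apply: symeq_refl.
have [m mA hA] := arg_maxnP (fun i : 'I_n => val i) m0A.
rewrite (partition_sum_block mA hA).
apply: symeq_trans (_ : symeq _ (word_set l (l m) (A :\ m))) _.
  apply: symeq_perm; rewrite /word_set -map_cons perm_map //.
  by rewrite (perm_trans (perm_to_rem (_ : m \in enum A))) ?mem_enum ?perm_cons ?perm_rem_enum.
apply: symeq_sym; apply: symeq_trans (telescope_blocks pl_linr l mA hA).
apply: symeq_sum => B /andP[mB BA]; apply: symeqZ.
rewrite -[X in symeq _ X](linext_word (mul_elt pl (lb B))) -GO_prod_word1.
apply: symeq_GO_prod_word1 => //; apply: symeq_sym; apply: IH.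
rewrite cardsD (setIidPr BA) (leq_trans _ cardA) // ltn_subrL.
by rewrite !card_gt0; apply/andP; split; apply/set0Pn; exists m.
Qed.

End Expansion.

Unset Implicit Arguments.

Theorem proposition2p1 (k : fieldType) (L : lmodType k) (pl : L -> L -> L)
  (k_char0 : [pchar k] =i pred0)
  (pl_linl : forall (a : k) (x y z : L), pl (a *: x + y) z = a *: pl x z + pl y z)
  (pl_linr : forall (a : k) (x y z : L), pl z (a *: x + y) = a *: pl z x + pl z y)
  (pl_prelie : forall x y z : L,
      pl (pl x y) z - pl x (pl y z) = pl (pl x z) y - pl x (pl z y))
  (n : nat) (l : 'I_n -> L) :
  symker
    (word [seq l i | i <- enum 'I_n]
     - \sum_(P : {set {set 'I_n}} | partition P [set: 'I_n])
         (-1) ^+ (n - #|P|) *: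
           GO_iter pl [seq lblock pl l A | A <- sorted_blocks P]).
Proof.
have := word_partition_sum pl_linl pl_linr l [set: 'I_n].
rewrite /partition_sum cardsT card_ord; apply: symeq_trans.
by apply: symeq_perm; rewrite perm_map // enumT -enum_setT.
Qed.
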